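(* Let $\mathbb{K}$ be a field and $G$ a connected finite simple graph. Then $\mathcal{A}_G(\mathbb{K})$ is combinatorially formal: it is formal, and every arrangement whose intersection lattice is isomorphic to $L(\mathcal{A}_G(\mathbb{K}))$ is formal.
   Context: For a finite simple graph $G$ on $[n]$ and a field $\mathbb{K}$, $H_I:=\ker(\sum_{i\in I}x_i)\subseteq\mathbb{K}^n$ and $\mathcal{A}_G(\mathbb{K}):=\{H_I\mid \varnothing\neq I\subseteq[n],\ G[I]\text{ connected}\}$. An arrangement $\mathcal{A}$ with defining linear forms $\alpha_H$ ($H\in\mathcal{A}$) is formal if the space of linear relations $\{(c_H)\in\mathbb{K}^{\mathcal{A}}\mid\sum_H c_H\alpha_H=0\}$ is spanned by relations supported on sets $\mathcal{A}_X=\{H\in\mathcal{A}\mid X\subseteq H\}$ with $X$ an intersection of codimension $2$. $L(\mathcal{A})$ is the intersection lattice ordered by reverse inclusion. *)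

(* Central hyperplane arrangements over a field K,
   given by finite families of nonzero linear forms on K^m
   (a form is a column vector alpha : 'cV[K]_m, acting on row vectors v by
   v *m alpha; its hyperplane is the row space kermx alpha). *)
From HB Require Import structures.
From mathcomp Require Import all_boot all_order all_algebra.
Set Implicit Arguments. Unset Strict Implicit. Unset Printing Implicit Defensive.
Import GRing.Theory.
Local Open Scope ring_scope.

Section Arr.
Variables (K : fieldType) (m : nat) (I : finType) (alpha : I -> 'cV[K]_m).

Definition hyp (i : I) : 'M[K]_m := kermx (alpha i).

Definition is_arrangement : Prop :=
  (forall i, alpha i != 0) /\
  (forall i j, (hyp i == hyp j)%MS -> i = j).

(* the intersection of the hyperplanes indexed by S (canonical matrix
   representative <<_>> of the subspace, so equal subspaces are equal) *)
Definition flat_of (S : {set I}) : 'M[K]_m :=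
  <<(\bigcap_(i in S) hyp i)>>%MS.

Definition is_flat (X : 'M[K]_m) : Prop := exists S : {set I}, X = flat_of S.

Definition loc (X : 'M[K]_m) : {set I} := [set i | (X <= hyp i)%MS].

Definition is_relation (c : I -> K) : Prop := \sum_i c i *: alpha i = 0.

Definition supported_on (c : I -> K) (S : {set I}) : Prop :=
  forall i, i \notin S -> c i = 0.

(* formality: every relation is a sum (hence lies in the span) of relations
   each supported on A_X for some codimension-2 intersection X *)
Definition formal : Prop :=
  forall c : I -> K, is_relation c ->
    exists (k : nat) (cs : 'I_k -> I -> K) (Xs : 'I_k -> 'M[K]_m),
      (forall j, [/\ is_flat (Xs j), (\rank (Xs j) + 2 = m)%N,
                     is_relation (cs j) & supported_on (cs j) (loc (Xs j))]) /\
      (forall i, c i = \sum_(j < k) cs j i).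
End Arr.

(* L(A) ~= L(B) as posets (ordered by reverse inclusion; an order
   isomorphism for reverse inclusion is the same as one for inclusion) *)
Definition lattice_iso (K : fieldType) (m1 m2 : nat) (I1 I2 : finType)
    (a1 : I1 -> 'cV[K]_m1) (a2 : I2 -> 'cV[K]_m2) : Prop :=
  exists f : 'M[K]_m1 -> 'M[K]_m2,
    [/\ forall X, is_flat a1 X -> is_flat a2 (f X),
        forall X Y, is_flat a1 X -> is_flat a1 Y -> f X = f Y -> X = Y,
        forall Y, is_flat a2 Y -> exists2 X, is_flat a1 X & f X = Y
      & forall X Y, is_flat a1 X -> is_flat a1 Y ->
          (f X <= f Y)%MS = (X <= Y)%MS].

(* Graphs: a simple graph on [n] = 'I_n is a symmetric irreflexive rel. *)
Definition induced_connected (n : nat) (e : rel 'I_n) (S : {set 'I_n}) : bool :=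
  [forall x in S, forall y in S,
     connect (fun a b => [&& e a b, a \in S & b \in S]) x y].

Definition graph_connected (n : nat) (e : rel 'I_n) : Prop :=
  forall x y, connect e x y.

Definition conn_set (n : nat) (e : rel 'I_n) :=
  {S : {set 'I_n} | (S != set0) && induced_connected e S}.

Definition graph_form (K : fieldType) (n : nat) (e : rel 'I_n)
    (S : conn_set e) : 'cV[K]_n :=
  \col_(j < n) (if j \in val S then 1 else 0).
Arguments graph_form K {n} e S.

(* The hyperplanes H_{v} of the vertices are independent, and every other H_I
   contains the codimension-2 flat H_{I \ v} ∩ H_{v}, where v is a vertex whose
   removal leaves G[I] connected.  Ordering hyperplanes by |I|, each non-vertex
   form is therefore a combination of two smaller ones through a local relation,
   and subtracting these writes any relation as a sum of local ones.  Both
   properties used (independence of a set of hyperplanes, and a hyperplane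
   containing the intersection of two others) are read off the intersection
   lattice, so they hold in every arrangement with an isomorphic lattice. *)

From mathcomp Require Import all_boot all_order all_algebra.
From mathcomp Require Import zify.
Set Implicit Arguments. Unset Strict Implicit. Unset Printing Implicit Defensive.
Import GRing.Theory.
Local Open Scope ring_scope.

Lemma kermx_sub_trmx (K : fieldType) (m p q : nat)
    (A : 'M[K]_(m, p)) (B : 'M[K]_(m, q)) :
  (kermx A <= kermx B)%MS -> (B^T <= A^T)%MS.
Proof.
move=> sAB; set N := row_mx A B.
have kerN : (kermx N :=: kermx A)%MS.
  apply/eqmxP/andP; split; rewrite sub_kermx.
    by move: (mulmx_ker N); rewrite mul_mx_row => /eqP; rewrite row_mx_eq0 => /andP[].
  by rewrite mul_mx_row mulmx_ker (sub_kermxP sAB) row_mx0.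
have rankN : \rank N = \rank A.
  have := mxrank_ker N; rewrite kerN mxrank_ker.
  have := rank_leq_row N; have := rank_leq_row A; lia.
have sAN : (A^T <= N^T)%MS by rewrite tr_row_mx -addsmxE addsmxSl.
have /eqmxP eqAN : (A^T == N^T)%MS.
  by rewrite -(mxrank_leqif_eq sAN) !mxrank_tr rankN.
by rewrite eqAN tr_row_mx -addsmxE addsmxSr.
Qed.

Section Flats.
Variables (K : fieldType) (m : nat) (J : finType) (beta : J -> 'cV[K]_m).
Implicit Types (S T : {set J}) (i j : J).

Lemma sub_flat p (X : 'M[K]_(p, m)) S :
  (X <= flat_of beta S)%MS = [forall i in S, X <= hyp beta i]%MS.
Proof. by rewrite genmxE; apply/sub_bigcapmxP/forall_inP. Qed.

Lemma flat_sub_hyp S i : i \in S -> (flat_of beta S <= hyp beta i)%MS.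
Proof. by move=> iS; move: (submx_refl (flat_of beta S)); rewrite sub_flat => /forall_inP->. Qed.

Lemma flatS S T : S \subset T -> (flat_of beta T <= flat_of beta S)%MS.
Proof.
by move=> /subsetP sST; rewrite sub_flat; apply/forall_inP => i /sST; apply: flat_sub_hyp.
Qed.

Lemma flat0 : flat_of beta set0 = 1%:M.
Proof. by rewrite /flat_of big_set0 genmx1. Qed.

Lemma flat1 i : (flat_of beta [set i] :=: hyp beta i)%MS.
Proof.
apply/eqmxP/andP; split; first by apply: flat_sub_hyp; rewrite inE.
by rewrite sub_flat; apply/forall_inP => k /set1P->.
Qed.

Lemma flat2 i1 i2 : (flat_of beta [set i1; i2] :=: hyp beta i1 :&: hyp beta i2)%MS.
Proof.
apply/eqmxP/andP; split.
  by rewrite sub_capmx !flat_sub_hyp // !inE eqxx ?orbT.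
by rewrite sub_flat; apply/forall_inP => k /set2P[]->; rewrite ?capmxSl ?capmxSr.
Qed.

Lemma flat_is_flat S : is_flat beta (flat_of beta S).
Proof. by exists S. Qed.

Lemma flat_anti X Y : is_flat beta X -> is_flat beta Y ->
  (X <= Y)%MS -> (Y <= X)%MS -> X = Y.
Proof.
move=> [S ->] [T ->]; rewrite /flat_of !genmxE => sXY sYX.
by apply/genmxP; rewrite sXY sYX.
Qed.

Lemma form_in_span2 i1 i2 i : (flat_of beta [set i1; i2] <= hyp beta i)%MS ->
  exists a b, beta i = a *: beta i1 + b *: beta i2.
Proof.
rewrite flat2 => sub.
have kerM : (kermx (row_mx (beta i1) (beta i2)) <= hyp beta i)%MS.
  apply: submx_trans sub; rewrite sub_capmx !sub_kermx.
  by have /eqP := mulmx_ker (row_mx (beta i1) (beta i2)); rewrite mul_mx_row row_mx_eq0.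
have := kermx_sub_trmx kerM; rewrite tr_row_mx -addsmxE => /sub_addsmxP[[u v] /= e].
rewrite [u]mx11_scalar [v]mx11_scalar !mul_scalar_mx in e.
by exists (u 0 0), (v 0 0); apply: trmx_inj; rewrite e linearD !linearZ.
Qed.

Definition flat_independent S : Prop :=
  forall w, w \in S -> ~~ (flat_of beta (S :\ w) <= flat_of beta S)%MS.

Lemma independent_relation_eq0 S c : flat_independent S ->
  is_relation beta c -> supported_on c S -> forall i, c i = 0.
Proof.
move=> indS relc suppc i; apply/eqP/negPn/negP => ci.
have iS : i \in S by apply: contraNT ci => /suppc ->.
set Y := flat_of beta (S :\ i).
have : Y *m \sum_k c k *: beta k = 0 by rewrite relc mulmx0.
rewrite mulmx_sumr (bigD1 i) //= big1 ?addr0 => [|k ki]; last first.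
  rewrite -scalemxAr; have [kS|/suppc->] := boolP (k \in S); last by rewrite scale0r.
  by rewrite (sub_kermxP (flat_sub_hyp _)) ?scaler0 // !inE ki.
rewrite -scalemxAr => /eqP; rewrite scaler_eq0 (negbTE ci) -sub_kermx => Yi.
apply: (negP (indS i iS)); rewrite sub_flat; apply/forall_inP => k kS.
by have [->|ki] := eqVneq k i; last by rewrite flat_sub_hyp // !inE ki.
Qed.

End Flats.

#[local] Hint Resolve flat_is_flat : core.

Section Arrangement.
Variables (K : fieldType) (m : nat) (J : finType) (beta : J -> 'cV[K]_m).
Hypothesis arr : is_arrangement beta.
Implicit Types (S : {set J}) (i j : J).

Lemma rank_hyp i : \rank (hyp beta i) = (m - 1)%N.
Proof. by rewrite mxrank_ker -mxrank_tr rank_rV trmx_eq0 arr.1. Qed.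

Lemma hyp_inj i k : (hyp beta i <= hyp beta k)%MS -> i = k.
Proof. by move=> sub; apply: arr.2; rewrite -(mxrank_leqif_eq sub) !rank_hyp. Qed.

Lemma flat0_not_sub_hyp i : ~~ (flat_of beta set0 <= hyp beta i)%MS.
Proof. by rewrite flat0 sub_kermx mul1mx arr.1. Qed.

Lemma flat_sup_atom X i : is_flat beta X -> (flat_of beta [set i] <= X)%MS ->
  X = flat_of beta [set i] \/ X = flat_of beta set0.
Proof.
move=> [S ->] sub; have [->|[k kS]] := set_0Vmem S; [by right | left].
have ik : i = k.
  by apply: hyp_inj; rewrite -(flat1 beta i) (submx_trans sub) ?flat_sub_hyp.
by rewrite ik in sub *; apply: flat_anti (flat_is_flat _ _) (flat_is_flat _ _) _ sub;
  rewrite flatS // sub1set.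
Qed.

Lemma rank_flat2 i1 i2 : i1 != i2 -> (\rank (flat_of beta [set i1; i2]) + 2 = m)%N.
Proof.
move=> ne; rewrite flat2.
have lt : (hyp beta i1 < hyp beta i1 + hyp beta i2)%MS.
  rewrite ltmxE addsmxSl addsmx_sub submx_refl /=.
  by apply: contra ne => /hyp_inj ->.
have := rank_ltmx lt; have := mxrank_sum_cap (hyp beta i1) (hyp beta i2).
have := rank_leq_col (hyp beta i1 + hyp beta i2)%MS; rewrite !rank_hyp; lia.
Qed.

End Arrangement.

Section Weight.
Variables (V : nmodType) (J : finType) (Bas : {set J}) (mu : J -> nat).
Implicit Types (c : J -> V) (A : {set J}).
Local Open Scope nat_scope.

(* Clearing a coordinate of level k may create at most two of lower level,
   which the base 3 makes a strict decrease. *)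
Definition weight c : nat := \sum_(i | (i \notin Bas) && (c i != 0%R)) 3 ^ mu i.

Lemma sum_pow3_lt A k : #|A| <= 2 -> {in A, forall i, mu i < k} ->
  \sum_(i in A) 3 ^ mu i < 3 ^ k.
Proof.
move=> cardA ltA.
have : 3 * \sum_(i in A) 3 ^ mu i <= #|A| * 3 ^ k.
  rewrite big_distrr -sum_nat_const /=; apply: leq_sum => i iA.
  by rewrite -expnS leq_pexp2l ?ltA.
have := expn_gt0 3 k; nia.
Qed.

Lemma weight_lt c c' j A : j \notin Bas -> c j != 0%R -> c' j = 0%R ->
    #|A| <= 2 -> {in A, forall i, mu i < mu j} ->
    (forall i, i \notin A -> i != j -> c' i = c i) ->
  weight c' < weight c.
Proof.
move=> jBas cj c'j cardA ltA c'E.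
rewrite /weight [X in _ < X](bigD1 j) /=; last by rewrite jBas cj.
have -> : \sum_(i | (i \notin Bas) && (c' i != 0%R)) 3 ^ mu i =
          \sum_(i | (i \notin Bas) && (c' i != 0%R) && (i != j)) 3 ^ mu i.
  by apply: eq_bigl => i; have [->|] := eqVneq i j; rewrite ?c'j ?eqxx ?andbF ?andbT.
apply: (@leq_ltn_trans (\sum_(i in A) 3 ^ mu i +
    \sum_(i | (i \notin Bas) && (c i != 0%R) && (i != j)) 3 ^ mu i));
  last by rewrite ltn_add2r sum_pow3_lt.
rewrite [X in _ <= X + _]big_mkcond [X in _ <= _ + X]big_mkcond -big_split big_mkcond.
apply: leq_sum => i _ /=; have [iA|iA] := boolP (i \in A).
  by case: ifP => _; case: ifP => _; rewrite ?leq_addr.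
by have [->|ij] := eqVneq i j; rewrite ?andbF // add0n c'E.
Qed.

End Weight.

Section Formality.
Variables (K : fieldType) (m : nat) (J : finType) (beta : J -> 'cV[K]_m).
Implicit Types (c d : J -> K) (i j : J).

Definition sum_of_local_relations c : Prop :=
  exists (k : nat) (cs : 'I_k -> J -> K) (Xs : 'I_k -> 'M[K]_m),
    (forall l, [/\ is_flat beta (Xs l), (\rank (Xs l) + 2 = m)%N,
                   is_relation beta (cs l) & supported_on (cs l) (loc beta (Xs l))]) /\
    (forall i, c i = \sum_(l < k) cs l i).

Lemma sum_of_local_relations0 c : (forall i, c i = 0) -> sum_of_local_relations c.
Proof.
move=> c0; exists 0%N, (fun _ _ => 0), (fun _ => 0); split; first by case.
by move=> i; rewrite big_ord0 c0.
Qed.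

Lemma local_relation_sum c X : is_flat beta X -> (\rank X + 2 = m)%N ->
  is_relation beta c -> supported_on c (loc beta X) -> sum_of_local_relations c.
Proof.
move=> flatX rankX relc suppc; exists 1%N, (fun _ => c), (fun _ => X).
by split=> // i; rewrite big_ord1.
Qed.

Lemma sum_of_local_relationsD c c1 c2 : (forall i, c i = c1 i + c2 i) ->
  sum_of_local_relations c1 -> sum_of_local_relations c2 -> sum_of_local_relations c.
Proof.
move=> cE [k1 [cs1 [Xs1 [loc1 E1]]]] [k2 [cs2 [Xs2 [loc2 E2]]]].
pose glue T (f1 : 'I_k1 -> T) (f2 : 'I_k2 -> T) l :=
  match split l with inl l1 => f1 l1 | inr l2 => f2 l2 end.
exists (k1 + k2)%N, (glue _ cs1 cs2), (glue _ Xs1 Xs2); split.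
  by move=> l; rewrite /glue; case: (split l).
move=> i; rewrite cE E1 E2 big_split_ord /glue.
by congr (_ + _); apply: eq_bigr => l _; rewrite ?(unsplitK (inl l)) ?(unsplitK (inr l)).
Qed.

Lemma sum_scale_pred1 (x : K) j : \sum_i (x * (i == j)%:R) *: beta i = x *: beta j.
Proof.
rewrite (bigD1 j) //= eqxx mulr1 big1 ?addr0 // => i /negbTE->.
by rewrite mulr0 scale0r.
Qed.

Hypothesis arr : is_arrangement beta.

Lemma pair_local_relation j1 j2 j (x : K) : j1 != j2 -> j \notin [set j1; j2] ->
    (flat_of beta [set j1; j2] <= flat_of beta [set j])%MS ->
  exists d, [/\ is_relation beta d, sum_of_local_relations d, d j = x
              & forall i, i \notin j |: [set j1; j2] -> d i = 0].
Proof.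
move=> ne j12 sub; rewrite flat1 in sub.
have [a [b ej]] := form_in_span2 sub.
pose d i := x * (i == j)%:R - x * a * (i == j1)%:R - x * b * (i == j2)%:R.
have suppd i : i \notin j |: [set j1; j2] -> d i = 0.
  by rewrite /d !inE => /norP[/negbTE-> /norP[/negbTE-> /negbTE->]]; rewrite !mulr0 !subr0.
have reld : is_relation beta d.
  rewrite /is_relation; under eq_bigr do rewrite !scalerBl.
  rewrite !sumrB !sum_scale_pred1 ej scalerDr !scalerA.
  by rewrite addrAC addrK subrr.
exists d; split=> //.
  apply: local_relation_sum (flat_is_flat _ _) (rank_flat2 arr ne) reld _.
  move=> i; rewrite inE => notX; apply: suppd; apply: contra notX.
  by rewrite !inE => /or3P[]/eqP->; rewrite ?sub ?flat_sub_hyp // !inE eqxx ?orbT.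
move: j12; rewrite !inE => /norP[/negbTE jj1 /negbTE jj2].
by rewrite /d eqxx jj1 jj2 !mulr0 !subr0 mulr1.
Qed.

Definition pairwise_generated (Bas : {set J}) (mu : J -> nat) : Prop :=
  flat_independent beta Bas /\
  forall j, j \notin Bas -> exists j1 j2,
    [/\ j1 != j2, (mu j1 < mu j)%N, (mu j2 < mu j)%N
      & (flat_of beta [set j1; j2] <= flat_of beta [set j])%MS].

Lemma pairwise_generated_formal Bas mu : pairwise_generated Bas mu -> formal beta.
Proof.
move=> [indep reduce].
suff IH w c : weight Bas mu c = w -> is_relation beta c -> sum_of_local_relations c.
  by move=> c; apply: IH.
elim/ltn_ind: w c => w IH c wc relc.
have [j /andP[jBas cj] | none] := pickP (fun i => (i \notin Bas) && (c i != 0)).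
  have [j1 [j2 [ne lt1 lt2 sub]]] := reduce j jBas.
  have j12 : j \notin [set j1; j2].
    by rewrite !inE; apply/norP; split; apply/eqP=> e; rewrite e ltnn in lt1 lt2.
  have [d [reld locd dj suppd]] := pair_local_relation (c j) ne j12 sub.
  pose c' i := c i - d i.
  have relc' : is_relation beta c'.
    by rewrite /is_relation; under eq_bigr do rewrite scalerBl; rewrite sumrB relc reld subrr.
  have locc' : sum_of_local_relations c'.
    apply: (IH (weight Bas mu c')) relc' => //; rewrite -wc.
    apply: (weight_lt (j := j) (A := [set j1; j2])) => //.
    - by rewrite /c' dj subrr.
    - by rewrite cards2 ltnS leq_b1.
    - by move=> i /set2P[]->.
    - by move=> i i12 ij; rewrite /c' suppd ?subr0 // in_setU1 negb_or ij.
  by apply: sum_of_local_relationsD locc' locd => i; rewrite subrK.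
apply: sum_of_local_relations0; apply: independent_relation_eq0 indep relc _ => i iBas.
by apply/eqP; move: (none i); rewrite /= iBas => /negbFE.
Qed.

End Formality.

Section LatticeIso.
Variables (K : fieldType) (m1 m2 : nat) (I J : finType).
Variables (alpha : I -> 'cV[K]_m1) (beta : J -> 'cV[K]_m2) (f : 'M[K]_m1 -> 'M[K]_m2).
Hypotheses (arrA : is_arrangement alpha) (arrB : is_arrangement beta).
Hypothesis f_flat : forall X, is_flat alpha X -> is_flat beta (f X).
Hypothesis f_onto : forall Y, is_flat beta Y -> exists2 X, is_flat alpha X & f X = Y.
Hypothesis f_mono : forall X Y, is_flat alpha X -> is_flat alpha Y ->
  (f X <= f Y)%MS = (X <= Y)%MS.

Lemma iso_flat0 : f (flat_of alpha set0) = flat_of beta set0.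
Proof.
have [Y flatY fY] := f_onto (flat_is_flat beta set0).
apply: flat_anti (f_flat (flat_is_flat _ _)) (flat_is_flat _ _) _ _.
  by rewrite (flat0 beta) submx1.
by rewrite -fY f_mono // (flat0 alpha) submx1.
Qed.

Lemma iso_atom i : exists j, f (flat_of alpha [set i]) = flat_of beta [set j].
Proof.
have [T fT] := f_flat (flat_is_flat alpha [set i]).
have [T0|[j jT]] := set_0Vmem T.
  case/negP: (flat0_not_sub_hyp arrA i).
  by rewrite -(flat1 alpha i) -f_mono // iso_flat0 fT T0.
exists j; have [Y flatY fY] := f_onto (flat_is_flat beta [set j]).
have subY : (flat_of alpha [set i] <= Y)%MS by rewrite -f_mono // fY fT flatS ?sub1set.
have [<-|Y0] := flat_sup_atom arrA flatY subY; first by [].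
case/negP: (flat0_not_sub_hyp arrB j).
by rewrite -(flat1 beta j) -fY Y0 iso_flat0.
Qed.

Section AtomMap.
Variable g : I -> J.
Hypothesis fg : forall i, f (flat_of alpha [set i]) = flat_of beta [set g i].

Lemma iso_flat_imset S : f (flat_of alpha S) = flat_of beta (g @: S).
Proof.
have [Y flatY fY] := f_onto (flat_is_flat beta (g @: S)).
apply: flat_anti (f_flat (flat_is_flat _ _)) (flat_is_flat _ _) _ _.
  rewrite sub_flat; apply/forall_inP => _ /imsetP[i iS ->].
  by rewrite -(flat1 beta (g i)) -fg f_mono // flatS ?sub1set.
rewrite -fY f_mono // sub_flat; apply/forall_inP => i iS.
by rewrite -(flat1 alpha i) -f_mono // fY fg flatS // sub1set imset_f.
Qed.

Lemma atom_map_inj : injective g.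
Proof.
move=> i k gik; apply: (hyp_inj arrA).
by rewrite -(flat1 alpha i) -(flat1 alpha k) -f_mono // !fg gik.
Qed.

Lemma atom_map_surj j : exists i, g i = j.
Proof.
have [_ [S ->] fS] := f_onto (flat_is_flat beta [set j]).
have [S0|[i iS]] := set_0Vmem S.
  case/negP: (flat0_not_sub_hyp arrB j).
  by rewrite -(flat1 beta j) -fS S0 iso_flat0.
exists i; apply/esym/(hyp_inj arrB).
by rewrite -(flat1 beta j) -fS iso_flat_imset flat_sub_hyp ?imset_f.
Qed.

Lemma pairwise_generated_transport Bas mu h : cancel h g ->
  pairwise_generated alpha Bas mu -> pairwise_generated beta (g @: Bas) (mu \o h).
Proof.
move=> hK [indep reduce]; have gK : cancel g h := fun i => atom_map_inj (hK (g i)).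
split.
  move=> _ /imsetP[w wBas ->].
  have -> : g @: Bas :\ g w = g @: (Bas :\ w).
    by apply/setP => j; rewrite -(hK j) in_setD1 !mem_imset ?in_setD1 ?(inj_eq atom_map_inj) //; apply: atom_map_inj.
  by rewrite -!iso_flat_imset f_mono // indep.
move=> j; rewrite -(hK j); move: (h j) => i; rewrite mem_imset; last exact: atom_map_inj.
move=> /reduce[i1 [i2 [ne lt1 lt2 sub]]].
exists (g i1), (g i2); rewrite /= !gK (inj_eq atom_map_inj); split=> //.
have -> : [set g i1; g i2] = g @: [set i1; i2] by rewrite imsetU1 imset_set1.
by rewrite -fg -iso_flat_imset f_mono.
Qed.

End AtomMap.

Lemma pairwise_generated_image Bas mu : pairwise_generated alpha Bas mu ->
  exists Bas' mu', pairwise_generated beta Bas' mu'.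
Proof.
move=> gen; have [g fg] := fin_all_exists iso_atom.
have [h hK] := fin_all_exists (atom_map_surj fg).
by exists (g @: Bas), (mu \o h); apply: pairwise_generated_transport.
Qed.

End LatticeIso.

Section InducedConnected.
Variables (n : nat) (e : rel 'I_n).
Hypothesis esym : symmetric e.
Implicit Types (S C : {set 'I_n}) (u c d : 'I_n).

Lemma induced_connected1 u : induced_connected e [set u].
Proof.
by apply/forall_inP => x /set1P->; apply/forall_inP => y /set1P->; apply: connect0.
Qed.

Lemma induced_connectedU1 C c u : induced_connected e C -> c \in C -> e c u ->
  induced_connected e (u |: C).
Proof.
move=> connC cC ecu; set eU := fun a b => [&& e a b, a \in u |: C & b \in u |: C].
have symU : connect_sym eU.
  apply: sym_connect_sym => a b; rewrite /eU esym.
  by case: (a \in u |: C); case: (b \in u |: C).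
have to_c x : x \in u |: C -> connect eU x c.
  case/setU1P=> [->|xC].
    by apply: connect1; rewrite /eU esym ecu !inE eqxx cC orbT.
  apply: connect_sub (forall_inP (forall_inP connC x xC) c cC) => a b /and3P[eab aC bC].
  by apply: connect1; rewrite /eU eab !inE aC bC !orbT.
apply/forall_inP => x xU; apply/forall_inP => y yU.
by apply: connect_trans (to_c x xU) _; rewrite symU to_c.
Qed.

Lemma induced_connected_exit S C c d : induced_connected e S -> C \subset S ->
  c \in C -> d \in S :\: C -> [exists x in C, exists y in S :\: C, e x y].
Proof.
move=> connS sCS cC /setDP[dS dC]; apply: contraT => noexit.
have exitF x y : x \in C -> y \in S -> y \notin C -> e x y -> False.
  move=> xC yS yC exy; case/negP: noexit; apply/exists_inP; exists x => //.
  by apply/exists_inP; exists y; rewrite // inE yC.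
pose eS a b := [&& e a b, a \in S & b \in S].
have closedC : closed eS C.
  move=> x y /and3P[exy xS yS].
  have [xC|xC] := boolP (x \in C); have [yC|yC] := boolP (y \in C) => //.
    by case: (exitF x y).
  by case: (exitF y x) => //; rewrite esym.
have := closed_connect closedC (forall_inP (forall_inP connS c (subsetP sCS c cC)) d dS).
by rewrite cC (negbTE dC).
Qed.

(* Extend a maximal proper connected subset of S by one vertex. *)
Lemma induced_connected_split S : S != set0 -> induced_connected e S -> (1 < #|S|)%N ->
  exists C u, [/\ u \notin C, S = u |: C, C != set0 & induced_connected e C].
Proof.
move=> S0 connS cardS; have /set0Pn[u0 u0S] := S0.
pose P C := [&& C \proper S, C != set0 & induced_connected e C].
have P1 : P [set u0].
  rewrite /P induced_connected1 andbT properE sub1set u0S /=; apply/andP; split.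
    by apply: contraTN cardS => /subset_leq_card; rewrite cards1 leqNgt.
  by apply/set0Pn; exists u0; rewrite inE.
have [C /and3P[CS C0 connC] maxC] := arg_maxnP (fun C => #|C|) P1.
have /set0Pn[c cC] := C0; have [sCS [d dS dC]] := properP CS.
have dSC : d \in S :\: C by rewrite inE dC.
have /exists_inP[x xC /exists_inP[u /setDP[uS uC] exu]] :=
  induced_connected_exit connS sCS cC dSC.
have connU := induced_connectedU1 connC xC exu.
have [US|neq] := eqVneq (u |: C) S; first by exists C, u.
have : P (u |: C).
  rewrite /P connU properEneq neq subUset sub1set uS sCS /=.
  by rewrite andbT; apply/set0Pn; exists u; rewrite !inE eqxx.
by move/maxC; rewrite /= cardsU1 uC add1n ltnn.
Qed.

End InducedConnected.

Section GraphArrangement.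
Variables (K : fieldType) (n : nat) (e : rel 'I_n).
Local Notation alpha := (graph_form K e).
Implicit Types (S T : conn_set e) (u : 'I_n).

Lemma graph_form_hyp u S : (('e_u : 'rV[K]_n) <= hyp alpha S)%MS = (u \notin val S).
Proof.
rewrite sub_kermx -rowE; apply/eqP/idP => [/matrixP/(_ 0 0)|uS].
  by rewrite !mxE; case: (u \in val S) => // /eqP; rewrite oner_eq0.
by apply/matrixP => i j; rewrite !mxE (negbTE uS).
Qed.

Lemma graph_arrangement : is_arrangement alpha.
Proof.
split=> [S|S T /eqmxP eqST].
  have /andP[/set0Pn[u uS] _] := valP S.
  by apply/eqP => /matrixP/(_ u 0); rewrite !mxE uS => /eqP; rewrite oner_eq0.
apply: val_inj; apply/setP => u; apply: negb_inj.
by rewrite -!graph_form_hyp eqST.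
Qed.

Definition singletons : {set conn_set e} := [set S | #|(val S : {set 'I_n})| == 1%N].

Lemma singletons_independent : flat_independent alpha singletons.
Proof.
move=> W; rewrite inE => /cards1P[u Wu].
have uD : (('e_u : 'rV[K]_n) <= flat_of alpha (singletons :\ W))%MS.
  rewrite sub_flat; apply/forall_inP => T; rewrite !inE => /andP[TW /cards1P[v Tv]].
  rewrite graph_form_hyp Tv inE; apply: contra TW => /eqP uv.
  by apply/eqP/val_inj; rewrite Tv Wu uv.
apply: contraNN (_ : ~~ (('e_u : 'rV[K]_n) <= hyp alpha W)%MS) => [sub|]; last first.
  by rewrite graph_form_hyp Wu inE eqxx.
by rewrite (submx_trans uD) // (submx_trans sub) // flat_sub_hyp // inE Wu cards1.
Qed.

Lemma graph_form_pairwise_generated : symmetric e ->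
  pairwise_generated alpha singletons (fun S => #|val S|).
Proof.
move=> esym; split; first exact: singletons_independent.
move=> S; rewrite inE => notsing; have /andP[S0 connS] := valP S.
have cardS : (1 < #|val S|)%N by rewrite ltn_neqAle eq_sym notsing card_gt0.
have [C [u [uC SE C0 connC]]] := induced_connected_split esym S0 connS cardS.
have connC' : (C != set0) && induced_connected e C by rewrite C0.
have connu : ([set u] != set0) && induced_connected e [set u].
  by rewrite induced_connected1 andbT; apply/set0Pn; exists u; rewrite inE.
pose T1 : conn_set e := exist _ C connC'; pose T2 : conn_set e := exist _ [set u] connu.
exists T1, T2; rewrite /= SE cardsU1 uC; split=> //.
- by apply/eqP => /(congr1 val) /= CE; move: uC; rewrite CE inE eqxx.
- by rewrite cards1 ltnS card_gt0.
have formE : alpha S = alpha T1 + alpha T2.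
  apply/matrixP => x y; rewrite !mxE /= SE !inE.
  by have [->|_] := eqVneq x u; rewrite ?(negbTE uC) ?add0r ?addr0.
rewrite flat1 sub_kermx formE mulmxDr.
by rewrite !(sub_kermxP (flat_sub_hyp _ _)) ?addr0 // !inE eqxx ?orbT.
Qed.

End GraphArrangement.

Theorem mainTheorem12 (K : fieldType) (n : nat) (e : rel 'I_n) :
  symmetric e -> irreflexive e -> graph_connected e ->
  formal (graph_form K e) /\
  (forall (m : nat) (J : finType) (beta : J -> 'cV[K]_m),
     is_arrangement beta -> lattice_iso (graph_form K e) beta ->
     formal beta).
Proof.
move=> esym _ _.
have arrG := graph_arrangement K e.
have genG := graph_form_pairwise_generated K esym.
split; first exact (pairwise_generated_formal arrG genG).
move=> m J beta arrB [f [f_flat _ f_onto f_mono]].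
have [Bas [mu genB]] := pairwise_generated_image arrG arrB f_flat f_onto f_mono genG.
exact (pairwise_generated_formal arrB genB).
Qed.
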